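(* For every even $N\ge 2$, the matrix-valued function $F_{2,N}(z)$ (and hence $F_{1,N}(z)=I-F_{2,N}(z)$) has no pole at $z=1$, i.e. it extends analytically to $z=1$.
   Context: Fix $0<\alpha,\beta<1$. For $\varepsilon\in(0,1)$: $\phi_{\varepsilon,1}(z)=\begin{pmatrix}1&\varepsilon^2z^{-1}\\ \varepsilon^{-2}&1\end{pmatrix}$, $\phi_{\varepsilon,2}(z)=\frac{1}{1-z^{-1}}\phi_{\varepsilon,1}(z)$, $\phi_3(z)=\begin{pmatrix}1&z^{-1}\\1&1\end{pmatrix}$, $\phi_4(z)=\frac{1}{1-z^{-1}}\phi_3(z)$, $\Phi_\varepsilon=\phi_{\varepsilon,1}\phi_{\varepsilon,2}\phi_3\phi_4$. Let $\phi_N(z)=\Phi_\alpha(z)^{N/2}\Phi_\beta(z)^{N/2}$, $t_N=\operatorname{tr}\phi_N$; in a punctured neighborhood of $1$ the eigenvalues are $r_{1,N}=\frac12(t_N+\sqrt{t_N^2-4})$, $r_{2,N}=\frac12(t_N-\sqrt{t_N^2-4})$ with $\sqrt{t^2-4}=t(1-4/t^2)^{1/2}$ (principal branch), and $F_{1,N}(z),F_{2,N}(z)$ are the corresponding spectral projections ($\phi_N=r_{1,N}F_{1,N}+r_{2,N}F_{2,N}$, $F_{1,N}+F_{2,N}=I$, $F_{k,N}^2=F_{k,N}$, $F_{1,N}F_{2,N}=0$). *)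

From mathcomp Require Import all_boot all_algebra.
From mathcomp.real_closed Require Import complex.
From mathcomp Require Import all_classical all_reals topology normedtype derive.
Import GRing.Theory Num.Theory numFieldNormedType.Exports.

Set Implicit Arguments.
Unset Strict Implicit.
Unset Printing Implicit Defensive.

Local Open Scope ring_scope.

(* The complex numbers over a real field R, viewed as a numClosedFieldType, so
   that MathComp-Analysis equips it with its normed (C-)module structure over
   itself: [derivable f z 1] for [f : CC R -> CC R] is complex differentiability. *)
Definition CC (R : realType) : numClosedFieldType := R[i].

Section Defs.
Variable R : realType.
Local Notation C := (CC R).

Definition mx2 (a b c d : C) : 'M[C]_2 :=
  \matrix_(i < 2, j < 2)
    if (i : nat) == 0%N then (if (j : nat) == 0%N then a else b)
    else (if (j : nat) == 0%N then c else d).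

Definition phi1 (e : R) (z : C) : 'M[C]_2 :=
  mx2 1 ((real_complex R e : C) ^+ 2 * z^-1) ((real_complex R e : C) ^- 2) 1.
Definition phi2 (e : R) (z : C) : 'M[C]_2 := (1 - z^-1)^-1 *: phi1 e z.
Definition phi3 (z : C) : 'M[C]_2 := mx2 1 z^-1 1 1.
Definition phi4 (z : C) : 'M[C]_2 := (1 - z^-1)^-1 *: phi3 z.
Definition Phi (e : R) (z : C) : 'M[C]_2 :=
  phi1 e z *m phi2 e z *m phi3 z *m phi4 z.

Definition phiN (a b : R) (N : nat) (z : C) : 'M[C]_2 :=
  (Phi a z) ^+ N./2 *m (Phi b z) ^+ N./2.

Definition tN (a b : R) (N : nat) (z : C) : C := \tr (phiN a b N z).

(* sqrt(t^2 - 4) := t (1 - 4/t^2)^(1/2), principal branch.  [sqrtc] is the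
   principal square root: nonnegative real part, and nonnegative imaginary
   part when the real part is 0. *)
Definition sqrt_t2m4 (t : C) : C := t * @sqrtc R (1 - 4 / t ^+ 2).

Definition r1N (a b : R) (N : nat) (z : C) : C :=
  (tN a b N z + sqrt_t2m4 (tN a b N z)) / 2.
Definition r2N (a b : R) (N : nat) (z : C) : C :=
  (tN a b N z - sqrt_t2m4 (tN a b N z)) / 2.

(* Spectral projections of phi_N onto the eigenvalues r_{1,N}, r_{2,N}
   (for distinct eigenvalues, the unique F1, F2 with phi = r1 F1 + r2 F2,
   F1 + F2 = I):  F1 = (phi - r2 I)/(r1 - r2),  F2 = (phi - r1 I)/(r2 - r1). *)
Definition F1N (a b : R) (N : nat) (z : C) : 'M[C]_2 :=
  (r1N a b N z - r2N a b N z)^-1 *: (phiN a b N z - (r2N a b N z)%:M).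
Definition F2N (a b : R) (N : nat) (z : C) : 'M[C]_2 :=
  (r2N a b N z - r1N a b N z)^-1 *: (phiN a b N z - (r1N a b N z)%:M).

Definition extends_analytically_at (f : C -> 'M[C]_2) (z0 : C) : Prop :=
  exists g : C -> 'M[C]_2,
    (\forall z \near (z0 ^')%classic, f z = g z) /\
    (\forall z \near z0, forall i j : 'I_2, derivable (fun w => g w i j) z 1).

End Defs.

From mathcomp Require Import all_boot all_algebra.
From mathcomp.real_closed Require Import complex.
From mathcomp Require Import all_classical all_reals topology normedtype derive.
Import GRing.Theory Num.Theory numFieldNormedType.Exports.
From mathcomp Require Import all_order ring.
Import Order.TTheory.
Local Open Scope classical_set_scope.
Local Open Scope ring_scope.

(* Write Phi_e(z) = (1 - z^-1)^-2 Phi0_e(z), where Phi0_e = phi1 phi1 phi3 phi3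
   is holomorphic near 1.  Then phi_N = d^-1 phiN0 with d(z) = (1 - z^-1)^(2N), and
   the spectral projections of phi_N are those of phiN0, since they are invariant
   under scaling a matrix and its eigenvalues by a common nonzero factor.  The
   eigenvalues of phiN0 are (tau +- tau sqrt(1 - 4 d^2 / tau^2)) / 2 with
   tau = tr phiN0.  At z = 1 all entries of phiN0 are positive, so tau(1) > 0,
   while d(1) = 0: the radicand equals 1 there, the principal square root is
   holomorphic near it, and the eigenvalues stay distinct.  Hence the projection
   formulas are holomorphic near 1 and agree with F1N, F2N off z = 1. *)

Section SqrtcHolomorphic.
Context {R : realType}.
Local Notation C := (CC R).
Local Notation Re := (@complex.Re R).
Local Notation sqrtc := (@sqrtc R : C -> C).

Lemma Re_sqrtc_ge0 (x : C) : 0 <= Re (sqrtc x).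
Proof. by case: x => a b /=; rewrite sqrtr_ge0. Qed.

Lemma Re_sqrtc_gt0 (x : C) : 0 < Re x -> 0 < Re (sqrtc x).
Proof.
case: x => a b /= ha; rewrite [X in _ < X]/= sqrtr_gt0 divr_gt0 //.
by rewrite ltr_pwDr // sqrtr_ge0.
Qed.

Lemma sqrtc_neq0 (x : C) : 0 < Re x -> sqrtc x != 0.
Proof. by move=> /Re_sqrtc_gt0; apply: contraTneq => ->; rewrite ltxx. Qed.

Lemma ReD (x y : C) : Re (x + y) = Re x + Re y.
Proof. by case: x => a b; case: y. Qed.

(* Together with subr_sqrtc, this bound makes sqrtc Lipschitz near y when Re y > 0. *)
Lemma Re_sqrtc_le_normD (x y : C) : 0 < Re y ->
  ((Re (sqrtc y))%:C)%C <= `|sqrtc x + sqrtc y|.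
Proof.
move=> hy; have hxy : 0 <= Re (sqrtc x + sqrtc y).
  by rewrite ReD addr_ge0 ?Re_sqrtc_ge0 // ltW ?Re_sqrtc_gt0.
apply: le_trans (normc_ge_Re _); rewrite lecR ger0_norm // ReD.
by rewrite lerDr Re_sqrtc_ge0.
Qed.

Lemma subr_sqrtc (x y : C) : (sqrtc x - sqrtc y) * (sqrtc x + sqrtc y) = x - y.
Proof. by rewrite -subr_sqr !sqr_sqrtc. Qed.

Lemma cvg_sqrtc {T : Type} (F : set_system T) {FF : Filter F} (u : T -> C) (y : C) :
  0 < Re y -> u x @[x --> F] --> y -> sqrtc (u x) @[x --> F] --> sqrtc y.
Proof.
move=> hy hu; have rb0 : 0 < ((Re (sqrtc y))%:C)%C :> C by rewrite ltcR Re_sqrtc_gt0.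
apply/cvgrPdist_lt => e e0.
have eb : 0 < e * ((Re (sqrtc y))%:C)%C by rewrite mulr_gt0.
have /(_ FF) := (cvgrPdist_lt _ _).1 hu _ eb; apply: filterS => x hx.
rewrite -(ltr_pM2r rb0); apply: le_lt_trans hx.
by rewrite -(subr_sqrtc y) normrM ler_wpM2l // addrC Re_sqrtc_le_normD.
Qed.

Lemma differentiable_sqrtc (y : C) : 0 < Re y -> differentiable sqrtc y.
Proof.
move=> hy; have sy0 : sqrtc y + sqrtc y != 0.
  by apply/eqP => /(congr1 Re); rewrite ReD /=; apply/eqP/lt0r_neq0/addr_gt0;
    exact: Re_sqrtc_gt0.
(* The difference quotient at y is 1 / (sqrtc (y + h) + sqrtc y). *)
apply/derivable1_diffP/cvg_ex; exists (sqrtc y + sqrtc y)^-1.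
have sqrt_shift : (fun h : C => sqrtc (h + y)) @ 0^' --> sqrtc y.
  have shift_y : (fun h : C => h + y) @ 0^' --> y.
    have : (fun h : C => h + y) @ 0 --> 0 + y.
      exact: (@cvgD _ _ _ _ (nbhs_filter (0 : C)) id (fun=> y) 0 y cvg_id (cvg_cst y)).
    rewrite add0r; apply: cvg_trans; apply: cvg_app; exact: nbhs_dnbhs.
  exact: cvg_sqrtc.
apply: cvg_trans (cvgV sy0 (cvgD sqrt_shift (cvg_cst (sqrtc y)))).
apply: near_eq_cvg; near=> h.
have h0 : h != 0 by near: h; exact: nbhs_dnbhs_neq.
rewrite /= /shift /= [_%:A]mulr1 -[_ *: _]/(_ * _).
rewrite -[(_ + _) h]/(sqrtc (h + y) + sqrtc y).
have := subr_sqrtc (h + y) y; rewrite addrK.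
move: (sqrtc (h + y)) => s k.
have hs : s + sqrtc y != 0 by apply: contraNneq h0 => hs; rewrite -k hs mulr0.
have hd : s - sqrtc y != 0 by apply: contraNneq h0 => hd; rewrite -k hd mul0r.
by rewrite -k; field; rewrite hs hd.
Unshelve. all: by end_near.
Qed.

Lemma Re_gt0_dist1 (x : C) : `|1 - x| < 1 -> 0 < Re x.
Proof.
move=> /(le_lt_trans (normc_ge_Re _)); rewrite ltcR.
case: x => p q /= /(le_lt_trans (ler_norm _)).
by rewrite ltrBlDr ltrDl.
Qed.

End SqrtcHolomorphic.

(* For a 2x2 matrix A with distinct eigenvalues r and s, [spectral_proj A r s]
   is the projection onto the s-eigenspace along the r-eigenspace; F1N and F2N
   are of this form. *)
Definition spectral_proj {K : fieldType} {n} (A : 'M[K]_n) (r s : K) : 'M[K]_n :=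
  (s - r)^-1 *: (A - r%:M).

Lemma spectral_projZ (K : fieldType) n (c : K) (A : 'M_n) r s : c != 0 ->
  spectral_proj (c *: A) (c * r) (c * s) = spectral_proj A r s.
Proof.
move=> c0; rewrite /spectral_proj -mulrBr invfM -scale_scalar_mx -scalerBr.
by rewrite scalerA mulrAC mulVf // mul1r.
Qed.

Section MatrixHolomorphic.
Context {R : realType}.
Local Notation C := (CC R).

Definition mx_differentiable {m n} (A : C -> 'M[C]_(m, n)) (z : C) :=
  forall i j, differentiable (fun w => A w i j) z.

Lemma differentiable_exprn (f : C -> C) n z :
  differentiable f z -> differentiable (fun w => f w ^+ n) z.
Proof.
move=> df; elim: n => [|n IHn].
  by under eq_fun do rewrite expr0; exact: differentiable_cst.
by under eq_fun do rewrite exprS; exact: differentiableM.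
Qed.

Lemma differentiable_mull (c : C) (f : C -> C) z :
  differentiable f z -> differentiable (fun w => c * f w) z.
Proof. exact: differentiableM (differentiable_cst c z). Qed.

Lemma differentiable_mulr (c : C) (f : C -> C) z :
  differentiable f z -> differentiable (fun w => f w * c) z.
Proof. by move=> df; exact: differentiableM df (differentiable_cst c z). Qed.

Lemma mx_differentiable_mul {m n p}
    {A : C -> 'M[C]_(m, n)} {B : C -> 'M[C]_(n, p)} {z} :
  mx_differentiable A z -> mx_differentiable B z ->
  mx_differentiable (fun w => A w *m B w) z.
Proof.
move=> dA dB i j; under eq_fun do rewrite mxE.
rewrite -(fct_sumE _ _ (fun k w => A w i k * B w k j)).
by apply: differentiable_sum => k; exact: differentiableM.
Qed.

Lemma mx_differentiable_exp {n} {A : C -> 'M[C]_n.+1} k {z} :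
  mx_differentiable A z -> mx_differentiable (fun w => A w ^+ k) z.
Proof.
move=> dA; elim: k => [|k IHk] i j.
  under eq_fun do rewrite expr0; exact: differentiable_cst.
under eq_fun do rewrite exprS -mulmxE.
exact: mx_differentiable_mul.
Qed.

Lemma mx_differentiable_mx2 (f1 f2 f3 f4 : C -> C) z :
  differentiable f1 z -> differentiable f2 z -> differentiable f3 z ->
  differentiable f4 z ->
  mx_differentiable (fun w => mx2 (f1 w) (f2 w) (f3 w) (f4 w)) z.
Proof.
move=> d1 d2 d3 d4 i j; under eq_fun do rewrite mxE.
by case: (_ == _); case: (_ == _).
Qed.

Lemma differentiable_trace {n} {A : C -> 'M[C]_n} {z} :
  mx_differentiable A z -> differentiable (fun w => \tr (A w)) z.
Proof.
move=> dA; rewrite -(fct_sumE _ _ (fun i w => A w i i)).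
by apply: differentiable_sum => i; exact: dA.
Qed.

Lemma mx_differentiable_spectral_proj {n} {A : C -> 'M_n} {r s : C -> C} {z} :
  mx_differentiable A z -> differentiable r z -> differentiable s z -> s z != r z ->
  mx_differentiable (fun w => spectral_proj (A w) (r w) (s w)) z.
Proof.
move=> dA dr ds srz i j; under eq_fun do rewrite !mxE.
apply: differentiableM.
  by apply: differentiableV; rewrite ?subr_eq0 //; exact: differentiableB.
apply: differentiableB; first exact: dA.
case: (i == j); first by under eq_fun do rewrite mulr1n.
by under eq_fun do rewrite mulr0n; exact: differentiable_cst.
Qed.

End MatrixHolomorphic.

Section PositiveMatrix.
Context {T : numDomainType}.

Definition mx_gt0 {m n} (A : 'M[T]_(m, n)) := forall i j, 0 < A i j.

Lemma mx_gt0_mul {m n p} {A : 'M[T]_(m, n.+1)} {B : 'M_(n.+1, p)} :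
  mx_gt0 A -> mx_gt0 B -> mx_gt0 (A *m B).
Proof.
move=> A0 B0 i j; rewrite mxE big_ord_recl.
apply: ltr_wpDr; last exact: mulr_gt0.
by apply: sumr_ge0 => k _; rewrite ltW ?mulr_gt0.
Qed.

Lemma mx_gt0_exp {n} {A : 'M[T]_n.+1} k : mx_gt0 A -> mx_gt0 (A ^+ k.+1).
Proof.
move=> A0; elim: k => [|k IHk]; first by rewrite expr1.
by rewrite exprS -mulmxE; exact: mx_gt0_mul.
Qed.

Lemma mxtrace_gt0 {n} {A : 'M[T]_n.+1} : mx_gt0 A -> 0 < \tr A.
Proof.
move=> A0; rewrite /mxtrace big_ord_recl.
by apply: ltr_wpDr => //; apply: sumr_ge0 => i _; rewrite ltW.
Qed.

End PositiveMatrix.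

Section PhiN.
Context {R : realType}.
Local Notation C := (CC R).

(* Phi e without the scalar factors (1 - z^-1)^-1 of phi2 and phi4: these carry
   the whole singularity at z = 1, and spectral projections do not see them. *)
Definition Phi0 (e : R) (z : C) : 'M[C]_2 := phi1 e z *m phi1 e z *m phi3 z *m phi3 z.

Lemma Phi_Phi0 e z : Phi e z = (1 - z^-1) ^- 2 *: Phi0 e z.
Proof. by rewrite /Phi /phi2 /phi4 -!scalemxAr -!scalemxAl scalerA -invfM. Qed.

Variables (a b : R) (N : nat).

Definition phiN0 (z : C) : 'M[C]_2 := Phi0 a z ^+ N./2 *m Phi0 b z ^+ N./2.
Definition phiN_den (z : C) : C := (1 - z^-1) ^+ (4 * N./2).

Lemma phiN_phiN0 z : phiN a b N z = (phiN_den z)^-1 *: phiN0 z.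
Proof.
rewrite /phiN !Phi_Phi0 !exprZn -scalemxAl -scalemxAr scalerA /phiN_den.
by rewrite -exprVn -!exprM -exprD exprVn addnn -mul2n mulnA.
Qed.

(* The eigenvalues of phiN0 are lamN true and lamN false; dividing by phiN_den
   gives r1N and r2N.  At z = 1 the denominator vanishes, so discN 1 = 1 and the
   square root is taken far from its branch cut. *)
Definition tN0 (z : C) : C := \tr (phiN0 z).
Definition discN (z : C) : C := 1 - 4 * phiN_den z ^+ 2 / tN0 z ^+ 2.
Definition lamN (s : bool) (z : C) : C :=
  (tN0 z + (if s then 1 else -1) * (tN0 z * sqrtc (discN z))) / 2.

Lemma tN_tN0 z : tN a b N z = (phiN_den z)^-1 * tN0 z.
Proof. by rewrite /tN phiN_phiN0 mxtraceZ. Qed.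

Lemma r1N_lamN z : r1N a b N z = (phiN_den z)^-1 * lamN true z.
Proof.
rewrite /r1N /lamN /sqrt_t2m4 tN_tN0 exprMn invfM exprVn invrK mulrA -/(discN z).
by ring.
Qed.

Lemma r2N_lamN z : r2N a b N z = (phiN_den z)^-1 * lamN false z.
Proof.
rewrite /r2N /lamN /sqrt_t2m4 tN_tN0 exprMn invfM exprVn invrK mulrA -/(discN z).
by ring.
Qed.

Lemma phiN_den_neq0 z : z != 1 -> phiN_den z != 0.
Proof.
move=> z1; rewrite expf_neq0 // subr_eq0; apply: contra z1 => /eqP z1.
by rewrite -[z]invrK -z1 invr1.
Qed.

Lemma mx_differentiable_Phi0 e z : z != 0 -> mx_differentiable (Phi0 e) z.
Proof.
move=> z0; have dinv := differentiable_Rinv z0.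
have dphi1 : mx_differentiable (phi1 e) z.
  by apply: mx_differentiable_mx2 => //; apply: differentiableM.
have dphi3 : mx_differentiable (@phi3 R) z by exact: mx_differentiable_mx2.
exact: mx_differentiable_mul
  (mx_differentiable_mul (mx_differentiable_mul dphi1 dphi1) dphi3) dphi3.
Qed.

Lemma mx_differentiable_phiN0 z : z != 0 -> mx_differentiable phiN0 z.
Proof.
move=> z0; rewrite /phiN0; exact: mx_differentiable_mul
  (mx_differentiable_exp N./2 (mx_differentiable_Phi0 a _ z0))
  (mx_differentiable_exp N./2 (mx_differentiable_Phi0 b _ z0)).
Qed.

Lemma differentiable_tN0 z : z != 0 -> differentiable tN0 z.
Proof. by move=> z0; exact: differentiable_trace (mx_differentiable_phiN0 _ z0). Qed.

Lemma differentiable_discN z : z != 0 -> tN0 z != 0 -> differentiable discN z.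
Proof.
move=> z0 tN0z; have dtN0 := differentiable_tN0 _ z0.
have dden : differentiable phiN_den z.
  rewrite /phiN_den; apply: differentiable_exprn; apply: differentiableB.
    exact: differentiable_cst.
  exact: differentiable_Rinv.
rewrite /discN; apply: differentiableB; first exact: differentiable_cst.
apply: differentiableM; first exact/differentiable_mull/differentiable_exprn.
by apply: differentiableV; [exact: differentiable_exprn | rewrite expf_neq0].
Qed.

Lemma differentiable_lamN s z :
  z != 0 -> tN0 z != 0 -> 0 < complex.Re (discN z) -> differentiable (lamN s) z.
Proof.
move=> z0 tN0z discN_gt0; have dtN0 := differentiable_tN0 _ z0.
have dsqrt : differentiable (fun w => sqrtc (discN w) : C) z.
  apply: differentiable_comp; first exact: differentiable_discN.
  exact: differentiable_sqrtc.
rewrite /lamN; apply: differentiable_mulr; apply: differentiableD => //.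
by apply: differentiable_mull; exact: differentiableM.
Qed.

Lemma lamN_neq z s :
  tN0 z != 0 -> 0 < complex.Re (discN z) -> lamN (~~ s) z != lamN s z.
Proof.
move=> tN0z /sqrtc_neq0 q0; rewrite eq_sym -subr_eq0.
have -> : lamN s z - lamN (~~ s) z = (if s then 1 else -1) * (tN0 z * sqrtc (discN z)).
  by rewrite /lamN; case: s => /=; field.
by rewrite !mulf_neq0 //; case: s; rewrite ?oppr_eq0 oner_eq0.
Qed.

End PhiN.

Section NearOne.
Context {R : realType}.
Variables (a b : R) (N : nat).
Hypotheses (a_gt0 : 0 < a) (b_gt0 : 0 < b) (N2_gt0 : (0 < N./2)%N).
Local Notation C := (CC R).
Local Notation tN0 := (tN0 a b N).
Local Notation discN := (discN a b N).

Lemma mx_gt0_Phi0_1 {e : R} : 0 < e -> mx_gt0 (Phi0 e (1 : C)).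
Proof.
move=> e_gt0; have ec : 0 < (e%:C)%C :> C by rewrite ltcR.
have mx2_gt0 (x y u v : C) : 0 < x -> 0 < y -> 0 < u -> 0 < v -> mx_gt0 (mx2 x y u v).
  by move=> x0 y0 u0 v0 i j; rewrite mxE; case: (_ == _); case: (_ == _).
have phi1_gt0 : mx_gt0 (phi1 e 1).
  by apply: mx2_gt0; rewrite ?invr1 ?mulr1 ?invr_gt0 ?exprn_gt0.
have phi3_gt0 : mx_gt0 (@phi3 R 1) by apply: mx2_gt0; rewrite ?invr1.
exact: mx_gt0_mul
  (mx_gt0_mul (mx_gt0_mul phi1_gt0 phi1_gt0) phi3_gt0) phi3_gt0.
Qed.

Lemma tN0_1_gt0 : 0 < tN0 1.
Proof.
apply: mxtrace_gt0; rewrite /phiN0; case: (N./2) N2_gt0 => // k _.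
exact: mx_gt0_mul
  (mx_gt0_exp k (mx_gt0_Phi0_1 a_gt0)) (mx_gt0_exp k (mx_gt0_Phi0_1 b_gt0)).
Qed.

Lemma discN_1 : discN 1 = 1.
Proof.
have dN1 : phiN_den N (1 : C) = 0.
  by rewrite /phiN_den invr1 subrr expr0n muln_eq0 /= eqn0Ngt N2_gt0.
by rewrite /discN dN1 expr0n mulr0 mul0r subr0.
Qed.

Lemma regular_near1 :
  \forall z \near (1 : C), [/\ z != 0, tN0 z != 0 & 0 < complex.Re (discN z)].
Proof.
have tN0_1_neq0 : tN0 1 != 0 by rewrite gt_eqF ?tN0_1_gt0.
have near_tN0 : \forall z \near (1 : C), `|tN0 1 - tN0 z| < `|tN0 1|.
  have := differentiable_continuous (differentiable_tN0 a b N _ (oner_neq0 C)).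
  move=> /(@cvgrPdist_lt _ _ _ (nbhs (1 : C)) (nbhs_filter (1 : C))).
  by apply; rewrite normr_gt0.
have near_discN : \forall z \near (1 : C), `|1 - discN z| < 1.
  have := differentiable_continuous
    (differentiable_discN a b N _ (oner_neq0 C) tN0_1_neq0).
  move=> /(@cvgrPdist_lt _ _ _ (nbhs (1 : C)) (nbhs_filter (1 : C))).
  by rewrite discN_1; apply; exact: ltr01.
have near_id : \forall z \near (1 : C), `|1 - z| < 1.
  exact: ((cvgrPdist_lt (F := nbhs (1 : C)) id 1).1 cvg_id _ ltr01).
near=> z; split.
- have : `|1 - z| < 1 by near: z.
  by apply: contraTneq => ->; rewrite subr0 normr1 ltxx.
- have : `|tN0 1 - tN0 z| < `|tN0 1| by near: z.
  by apply: contraTneq => ->; rewrite subr0 ltxx.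
- by apply: Re_gt0_dist1; near: z.
Unshelve. all: by end_near.
Qed.

Lemma spectral_proj_phiN_extends (s : bool) :
  extends_analytically_at (fun z => spectral_proj (phiN a b N z)
    ((phiN_den N z)^-1 * lamN a b N s z) ((phiN_den N z)^-1 * lamN a b N (~~ s) z)) 1.
Proof.
exists (fun z => spectral_proj (phiN0 a b N z) (lamN a b N s z) (lamN a b N (~~ s) z)).
split.
  near=> z; rewrite phiN_phiN0 spectral_projZ // invr_eq0 phiN_den_neq0 //.
  by near: z; exact: nbhs_dnbhs_neq.
near=> z.
have [z0 tN0z discN_gt0] : [/\ z != 0, tN0 z != 0 & 0 < complex.Re (discN z)].
  by near: z; exact: regular_near1.
have := mx_differentiable_spectral_proj (mx_differentiable_phiN0 a b N _ z0)
  (differentiable_lamN a b N s _ z0 tN0z discN_gt0)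
  (differentiable_lamN a b N (~~ s) _ z0 tN0z discN_gt0)
  (lamN_neq a b N _ s tN0z discN_gt0).
by move=> dg i j; apply/derivable1_diffP; exact: dg.
Unshelve. all: by end_near.
Qed.

End NearOne.

Theorem lemma3p5 (R : realType) (alpha beta : R)
  (ha : 0 < alpha < 1) (hb : 0 < beta < 1) (N : nat)
  (hN2 : (2 <= N)%N) (hNeven : ~~ odd N) :
  extends_analytically_at (F2N alpha beta N) 1 /\
  extends_analytically_at (F1N alpha beta N) 1.
Proof.
(* Only 0 < N./2 matters: phiN depends on N through N./2, so parity is unused. *)
have N2_gt0 : (0 < N./2)%N by rewrite half_gt0.
case/andP: ha => alpha_gt0 _; case/andP: hb => beta_gt0 _.
have extends_eq (F : CC R -> 'M_2) (s : bool) :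
    (forall z, F z = spectral_proj (phiN alpha beta N z)
      ((phiN_den N z)^-1 * lamN alpha beta N s z)
      ((phiN_den N z)^-1 * lamN alpha beta N (~~ s) z)) ->
    extends_analytically_at F 1.
  by move=> /funext ->; exact: spectral_proj_phiN_extends.
split; [apply: (extends_eq _ true) | apply: (extends_eq _ false)] => z.
- by rewrite /F2N -r1N_lamN -r2N_lamN.
- by rewrite /F1N -r1N_lamN -r2N_lamN.
Qed.
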